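(* Let $\mathcal{G}=(\mathcal{V}_A\cup\mathcal{V}_T,\mathcal{E},w)$ be a weighted bipartite graph with $|\mathcal{V}_A|\le|\mathcal{V}_T|$ that has at least one maximum matching, and let $e^*\in A(\mathcal{G})$ be a bottleneck edge. Let $\mathcal{G}^-$ be obtained from $\mathcal{G}$ by deleting both endpoints of $e^*$ and all edges incident to them, and $\mathcal{G}^+$ be obtained from $\mathcal{G}$ by deleting only the edge $e^*$; let $e^-\in A(\mathcal{G}^-)$ be a bottleneck edge of $\mathcal{G}^-$. For $\Delta\ge 0$ let $\Lambda_\Delta$ be the set of perturbations $\{\delta_e\}_{e\in\mathcal{E}}$ with $|\delta_e|\le\Delta$ for all $e\in\mathcal{E}$. (i) If $\mathcal{G}^+$ has a maximum matching, with bottleneck edge $e^+\in A(\mathcal{G}^+)$, and $$0\le\Delta\le\tfrac12\min\big(w_{e^*}-w_{e^-},\,w_{e^+}-w_{e^*}\big),$$ then the bottleneck assignment $e^*$ is robust to every perturbation in $\Lambda_\Delta$. (ii) If $\mathcal{G}^+$ has no maximum matching and $0\le\Delta\le\tfrac12(w_{e^*}-w_{e^-})$, then the bottleneck assignment $e^*$ is robust to every perturbation in $\Lambda_\Delta$.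
   Context: A weighted bipartite graph $\mathcal{G}=(\mathcal{V}_A\cup\mathcal{V}_T,\mathcal{E},w)$ has disjoint vertex sets $\mathcal{V}_A,\mathcal{V}_T$, edge set $\mathcal{E}\subseteq\mathcal{V}_A\times\mathcal{V}_T$ and real edge weights $w_e$. A matching is a set of pairwise non-adjacent edges. A maximum matching of such a graph is a matching covering every vertex of the agent side $\mathcal{V}_A$. For a graph $H$ with at least one maximum matching, $b(H)=\min_M\max_{e\in M}w_e$ over maximum matchings $M$ of $H$; a bottleneck edge of $H$ is an edge $e$ with $w_e=b(H)$ lying in some maximum matching $M$ with $\max_{e'\in M}w_{e'}=b(H)$; $A(H)$ is the set of bottleneck edges. Given perturbations $\{\delta_e\}_{e\in\mathcal{E}}\subset\mathbb{R}$, the perturbed graph $\bar{\mathcal{G}}$ has the same vertices and edges as $\mathcal{G}$ and weights $\bar w_e=w_e+\delta_e$. The bottleneck assignment $e^*\in A(\mathcal{G})$ is said to be robust to the perturbation $\{\delta_e\}$ if $e^*\in A(\bar{\mathcal{G}})$. *)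

From mathcomp Require Import all_boot all_order all_algebra.
Set Implicit Arguments. Unset Strict Implicit. Unset Printing Implicit Defensive.
Import Order.TTheory GRing.Theory Num.Theory.
Local Open Scope ring_scope.

(* Weights are a separate
   function w : A * T -> R (only its values on edges matter). *)
Record bgraph (A T : finType) := BGraph {
  agents : {set A};
  tasks  : {set T};
  edges  : {set A * T} }.

Section Defs.
Variables (A T : finType).
Implicit Types (G : bgraph A T) (M : {set A * T}) (e : A * T).

Definition wf_bgraph G : Prop := edges G \subset setX (agents G) (tasks G).

Definition is_matching G M : Prop :=
  M \subset edges G /\
  forall e1 e2, e1 \in M -> e2 \in M -> e1 != e2 ->
    (e1.1 != e2.1) /\ (e1.2 != e2.2).

Definition max_matching G M : Prop :=
  is_matching G M /\ forall a, a \in agents G -> exists2 e, e \in M & e.1 = a.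

Definition has_max_matching G : Prop := exists M, max_matching G M.

Definition attains_max {R : realDomainType} (w : A * T -> R) M e : Prop :=
  e \in M /\ forall e', e' \in M -> w e' <= w e.

(* b(H) = min_M max_{e in M} w_e over maximum matchings M.
   e is a bottleneck edge of H iff e lies in a maximum matching M whose
   maximum weight is w_e, and w_e = b(H), i.e. w_e is <= the maximum
   weight of every maximum matching. *)
Definition bottleneck_edge {R : realDomainType} G (w : A * T -> R) e : Prop :=
  (exists M, max_matching G M /\ attains_max w M e) /\
  (forall M', max_matching G M' -> exists2 e', e' \in M' & w e <= w e').

Definition del_endpoints G e : bgraph A T :=
  BGraph (agents G :\ e.1) (tasks G :\ e.2)
         [set f in edges G | (f.1 != e.1) && (f.2 != e.2)].

Definition del_edge G e : bgraph A T :=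
  BGraph (agents G) (tasks G) (edges G :\ e).

Definition in_Lambda {R : realDomainType} G (Delta : R) (delta : A * T -> R) : Prop :=
  forall e, e \in edges G -> `|delta e| <= Delta.

Definition robust {R : realDomainType} G (w delta : A * T -> R) e : Prop :=
  bottleneck_edge G (fun f => w f + delta f) e.
End Defs.

From mathcomp Require Import all_boot all_order all_algebra.
From mathcomp Require Import lra.
Import Order.TTheory GRing.Theory Num.Theory.
Set Implicit Arguments. Unset Strict Implicit. Unset Printing Implicit Defensive.
Local Open Scope ring_scope.

(* A perturbation bounded by Delta moves each weight by at most Delta, so a
   weight gap of 2 Delta keeps its sign.  Adding estar to an optimal maximum
   matching of G^- gives a maximum matching of G whose other weights are at
   most w eminus <= w estar - 2 Delta, so estar remains its heaviest edge after
   the perturbation.  A maximum matching of G avoiding estar is one of G^+; it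
   has an edge of weight at least w eplus >= w estar + 2 Delta, which stays at
   least as heavy as estar.  In case (ii) there is no such matching at all. *)

Lemma ler_perturbed (R : realDomainType) (x y dx dy Delta : R) :
  `|dx| <= Delta -> `|dy| <= Delta -> x + 2 * Delta <= y -> x + dx <= y + dy.
Proof. by rewrite !ler_norml => /andP[? ?] /andP[? ?] ?; lra. Qed.

Section Matchings.
Variables (A T : finType) (G : bgraph A T).
Implicit Types (M : {set A * T}) (e : A * T).

Lemma edge_of_max_matching M e : max_matching G M -> e \in M -> e \in edges G.
Proof. by case=> [[/subsetP sub _] _] /sub. Qed.

Lemma edges_del_endpoints e f :
  f \in edges (del_endpoints G e) ->
  [/\ f \in edges G, f.1 != e.1 & f.2 != e.2].
Proof. by rewrite inE => /and3P[]. Qed.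

Lemma max_matching_setU1_del_endpoints M e :
  e \in edges G -> max_matching (del_endpoints G e) M -> max_matching G (e |: M).
Proof.
move=> eG [[/subsetP sub disj] cov].
have subG f : f \in M -> [/\ f \in edges G, f.1 != e.1 & f.2 != e.2].
  by move/sub; apply: edges_del_endpoints.
split; [split|].
- by apply/subsetP => f; rewrite in_setU1 => /predU1P[-> //|/subG[]].
- move=> f1 f2; rewrite !in_setU1.
  case/predU1P=> [->|f1M] /predU1P[->|f2M]; first by rewrite eqxx.
  + by case: (subG _ f2M) => _ *; split; rewrite eq_sym.
  + by case: (subG _ f1M).
  + exact: disj.
- move=> a aG; have [->|ne] := eqVneq a e.1; first by exists e; rewrite ?setU11.
  have [|f fM <-] := cov a; first by rewrite !inE ne.
  by exists f; rewrite // in_setU1 fM orbT.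
Qed.

Lemma max_matching_del_edge M e :
  max_matching G M -> e \notin M -> max_matching (del_edge G e) M.
Proof.
move=> [[/subsetP sub disj] cov] eM; split; [split|] => //.
apply/subsetP => f fM; rewrite !inE sub // andbT.
by apply: contraNneq eM => <-.
Qed.

Lemma bottleneck_edge_avoiding (R : realDomainType) (w : A * T -> R) e :
  (exists M, max_matching G M /\ attains_max w M e) ->
  (forall M', max_matching G M' -> e \notin M' -> exists2 f, f \in M' & w e <= w f) ->
  bottleneck_edge G w e.
Proof.
move=> ex avoid; split=> // M' MM'.
by have [eM'|] := boolP (e \in M'); [exists e | exact: avoid].
Qed.

End Matchings.

Section Robustness.
Variables (R : realDomainType) (A T : finType) (G : bgraph A T).
Variables (w delta : A * T -> R) (Delta : R) (estar eminus : A * T).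
Hypotheses (estar_bottleneck : bottleneck_edge G w estar)
           (eminus_bottleneck : bottleneck_edge (del_endpoints G estar) w eminus)
           (gap_minus : 2 * Delta <= w estar - w eminus)
           (delta_small : in_Lambda G Delta delta).

Lemma estar_in_edges : estar \in edges G.
Proof.
by have [[M [MM [eM _]]] _] := estar_bottleneck; apply: edge_of_max_matching eM.
Qed.

Lemma perturbed_attains_max_estar :
  exists M, max_matching G M /\ attains_max (fun f => w f + delta f) M estar.
Proof.
have [[Mm [MMm [_ Mm_max]]] _] := eminus_bottleneck.
exists (estar |: Mm); split.
  exact: max_matching_setU1_del_endpoints estar_in_edges MMm.
split=> [|f]; first exact: setU11.
rewrite in_setU1 => /predU1P[-> //|fMm].
have [fG _ _] := edges_del_endpoints (edge_of_max_matching MMm fMm).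
apply: (ler_perturbed (delta_small fG) (delta_small estar_in_edges)).
by have := Mm_max _ fMm; move: gap_minus; lra.
Qed.

Lemma robust_of_avoiding :
  (forall M', max_matching G M' -> estar \notin M' ->
     exists2 f, f \in M' & w estar + 2 * Delta <= w f) ->
  robust G w delta estar.
Proof.
move=> avoid; apply: bottleneck_edge_avoiding perturbed_attains_max_estar _.
move=> M' MM' eM'; have [f fM' gap] := avoid M' MM' eM'.
exists f => //; have fG := edge_of_max_matching MM' fM'.
exact: ler_perturbed (delta_small estar_in_edges) (delta_small fG) gap.
Qed.

End Robustness.

Theorem theorem1 (R : realFieldType) (A T : finType) (G : bgraph A T)
    (w : A * T -> R) (estar eminus : A * T) :
  wf_bgraph G ->
  (#|agents G| <= #|tasks G|)%N ->
  has_max_matching G ->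
  bottleneck_edge G w estar ->
  bottleneck_edge (del_endpoints G estar) w eminus ->
  (forall (eplus : A * T) (Delta : R),
      has_max_matching (del_edge G estar) ->
      bottleneck_edge (del_edge G estar) w eplus ->
      0 <= Delta ->
      Delta <= 2^-1 * Num.min (w estar - w eminus) (w eplus - w estar) ->
      forall delta : A * T -> R, in_Lambda G Delta delta ->
        robust G w delta estar)
  /\
  (forall Delta : R,
      ~ has_max_matching (del_edge G estar) ->
      0 <= Delta ->
      Delta <= 2^-1 * (w estar - w eminus) ->
      forall delta : A * T -> R, in_Lambda G Delta delta ->
        robust G w delta estar).
Proof.
move=> _ _ _ estar_b eminus_b; split.
- move=> eplus Delta _ [_ eplus_min] _ Delta_le delta delta_small.
  set m := Num.min _ _ in Delta_le.
  have m_minus : m <= w estar - w eminus by rewrite ge_min lexx.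
  have m_plus : m <= w eplus - w estar by rewrite ge_min lexx orbT.
  have gap_minus : 2 * Delta <= w estar - w eminus by lra.
  have gap_plus : w estar + 2 * Delta <= w eplus by lra.
  apply: robust_of_avoiding estar_b eminus_b gap_minus delta_small _.
  move=> M' MM' eM'.
  have [f fM' le_f] := eplus_min M' (max_matching_del_edge MM' eM').
  by exists f => //; apply: le_trans le_f.
- move=> Delta no_plus _ Delta_le delta delta_small.
  apply: robust_of_avoiding estar_b eminus_b _ delta_small _; first lra.
  by move=> M' MM' eM'; case: no_plus; exists M'; apply: max_matching_del_edge.
Qed.
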